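(* Let $R$ be a commutative noetherian ring, let $\Phi$ be a specialization-closed subset of $\operatorname{Spec}R$, and let $n\ge0$ be an integer. Then the complement $\Phi^{\complement}=\operatorname{Spec}R\setminus\Phi$ is $n$-coherent if and only if $\mathrm H^i_\Phi(M)=0$ for all $i>n$ for every $R$-module $M$ satisfying $\mathrm H^i_\Phi(M)=0$ for all $i\le n$.
   Context: $\Phi$ specialization-closed means $\mathfrak p\in\Phi,\ \mathfrak p\subseteq\mathfrak q$ imply $\mathfrak q\in\Phi$. $\Gamma_\Phi(M)=\{m\in M\mid \operatorname{Supp}_R(Rm)\subseteq\Phi\}$ and $\mathrm H^i_\Phi$ is the $i$th right derived functor of $\Gamma_\Phi$ (local cohomology with respect to $\Phi$). A subset $\Psi\subseteq\operatorname{Spec}R$ is $n$-coherent if for every exact sequence $\cdots\to I_1\to I_0\to C\to0$ of $R$-modules with $I_i$ injective and $\operatorname{Ass}I_i\subseteq\Psi$ for $0\le i\le n$, the module $C$ embeds into an injective module $J$ with $\operatorname{Ass}J\subseteq\Psi$. *)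

From HB Require Import structures.
From mathcomp Require Import all_boot all_algebra.
Set Implicit Arguments. Unset Strict Implicit. Unset Printing Implicit Defensive.
Import GRing.Theory.
Local Open Scope ring_scope.

Section Defs.
Variable R : comNzRingType.

Definition is_ideal (I : R -> Prop) : Prop :=
  [/\ I 0, (forall x y, I x -> I y -> I (x + y)) & (forall r x, I x -> I (r * x))].

Definition is_prime_ideal (p : R -> Prop) : Prop :=
  [/\ is_ideal p, ~ p 1 & (forall x y, p (x * y) -> p x \/ p y)].

Definition spec := {p : R -> Prop | is_prime_ideal p}.
Definition pmem (p : spec) (x : R) : Prop := proj1_sig p x.

Definition noetherian : Prop :=
  forall I : nat -> R -> Prop, (forall k, is_ideal (I k)) ->
    (forall k x, I k x -> I k.+1 x) ->
    exists N, forall k x, (N <= k)%N -> I k x -> I N x.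

Definition specialization_closed (Phi : spec -> Prop) : Prop :=
  forall p q : spec, Phi p -> (forall x, pmem p x -> pmem q x) -> Phi q.

(* Support of a submodule N of M: primes p with N_p <> 0, i.e. some x in N
   with x/1 <> 0 in M_p, i.e. s *: x <> 0 for all s not in p. *)
Definition in_Supp (M : lmodType R) (N : M -> Prop) (p : spec) : Prop :=
  exists x, N x /\ forall s, ~ pmem p s -> s *: x <> 0.

Definition cyclic_sub (M : lmodType R) (m : M) : M -> Prop :=
  fun x => exists r : R, x = r *: m.

Definition in_Gamma (Phi : spec -> Prop) (M : lmodType R) (m : M) : Prop :=
  forall p, in_Supp (cyclic_sub m) p -> Phi p.

Definition Ass (M : lmodType R) (p : spec) : Prop :=
  exists m : M, forall r : R, pmem p r <-> r *: m = 0.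

Definition injective_module (J : lmodType R) : Prop :=
  forall (A B : lmodType R) (f : {linear A -> B}) (g : {linear A -> J}),
    injective f -> exists h : {linear B -> J}, forall a, h (f a) = g a.

Definition inj_resolution (M : lmodType R) (I : nat -> lmodType R)
  (d : forall i, {linear I i -> I i.+1}) (eps : {linear M -> I 0%N}) : Prop :=
  [/\ injective eps,
      (forall x, d 0%N x = 0 <-> exists m, eps m = x),
      (forall i x, d i.+1 x = 0 <-> exists y, d i y = x)
    & forall i, injective_module (I i)].

Definition Gamma_coh_zero (Phi : spec -> Prop) (I : nat -> lmodType R)
  (d : forall i, {linear I i -> I i.+1}) (i : nat) : Prop :=
  match i with
  | 0%N => forall x : I 0%N, in_Gamma Phi x -> d 0%N x = 0 -> x = 0
  | j.+1 => forall x : I j.+1, in_Gamma Phi x -> d j.+1 x = 0 ->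
              exists y : I j, in_Gamma Phi y /\ d j y = x
  end.

Definition H_Phi_zero (Phi : spec -> Prop) (M : lmodType R) (i : nat) : Prop :=
  forall (I : nat -> lmodType R) (d : forall i, {linear I i -> I i.+1})
         (eps : {linear M -> I 0%N}),
    inj_resolution d eps -> Gamma_coh_zero Phi d i.

Definition n_coherent (Psi : spec -> Prop) (n : nat) : Prop :=
  forall (C : lmodType R) (P : nat -> lmodType R)
         (e : forall i, {linear P i.+1 -> P i}) (pi : {linear P 0%N -> C}),
    (forall c, exists x, pi x = c) ->
    (forall x, pi x = 0 <-> exists y, e 0%N y = x) ->
    (forall i x, e i x = 0 <-> exists y, e i.+1 y = x) ->
    (forall i, (i <= n)%N ->
       injective_module (P i) /\ forall p, Ass (P i) p -> Psi p) ->
    exists (J : lmodType R) (f : {linear C -> J}),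
      [/\ injective f, injective_module J & forall p, Ass J p -> Psi p].

End Defs.

(* Everything rests on dimension shifting: for a short exact sequence
   0 -> A -> E -> B -> 0 with E injective and Gamma_Phi(E) = 0 one has
   H^(i+1)_Phi(A) = 0 iff H^i_Phi(B) = 0. Over a noetherian ring, and for Phi
   specialization-closed, Gamma_Phi(E) = 0 iff Ass E avoids Phi, and every module
   with Gamma_Phi = 0 embeds into such an E (a maximal essential extension inside an
   injective module is a direct summand of it). Vanishing of H^i_Phi can be tested on
   any one injective resolution, since any two are homotopy equivalent; resolutions
   exist because every module embeds into a product of copies of Hom_Z(R, Q/Z).
   If Phi^c is n-coherent, every cokernel of an exact sequence whose first n+1 terms
   are injectives with associated primes outside Phi has H^i_Phi = 0 for all i, and a
   module M with H^i_Phi(M) = 0 for i <= n is shifted n+1 times onto such a cokernel.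
   Conversely, for ... -> I_1 -> I_0 -> C -> 0 as in the definition of n-coherence,
   the kernels K_j satisfy H^i_Phi(K_j) = 0 for i <= j <= n; the hypothesis then gives
   H^(n+1)_Phi(K_n) = 0, shifting back gives Gamma_Phi(C) = 0, and C embeds into an
   injective module with Gamma_Phi = 0, i.e. with associated primes outside Phi. *)

From HB Require Import structures.
From mathcomp Require Import all_boot all_order all_algebra.
From mathcomp Require Import boolp classical_sets.
Set Implicit Arguments. Unset Strict Implicit. Unset Printing Implicit Defensive.
Import Order.TTheory GRing.Theory Num.Theory.
Local Open Scope ring_scope.
Local Open Scope classical_set_scope.

Lemma Zorn_nonempty_chains (T : Type) (P : set (set T)) (A0 : set T) :
  P A0 ->
  (forall F : set (set T), F `<=` P -> total_on F subset -> F !=set0 ->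
     P (\bigcup_(X in F) X)) ->
  exists A, P A /\ forall B, A `<=` B -> P B -> B `<=` A.
Proof.
move=> PA0 chainP.
have [|A [P'A Amax]] := @Zorn_bigcup T (fun Y => Y = set0 \/ P Y).
  move=> F FP Ftot; have [[Y [FY PY]]|noP] := pselect (exists Y, F Y /\ P Y).
    right; rewrite (_ : \bigcup_(X in F) X = \bigcup_(X in F `&` P) X).
      apply: chainP; [by move=> X [] | by move=> X Z [? _] [? _]; apply: Ftot | by exists Y].
    apply/seteqP; split=> t [X FX Xt]; last by exists X => //; case: FX.
    case: (FP X FX) => [X0|PX]; first by rewrite X0 in Xt.
    by exists X.
  left; apply/seteqP; split=> // t [X FX Xt].
  case: (FP X FX) => [X0|PX]; [by rewrite X0 in Xt | by case: noP; exists X].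
have maxA B : A `<=` B -> B = set0 \/ P B -> B `<=` A.
  move=> AB P'B t Bt; apply: contrapT => nAt; apply: (Amax B) => //.
  by split => // BA; apply: nAt; apply: BA.
exists A; split; last by move=> B AB PB; apply: maxA => //; right.
case: P'A => [A0e|//]; rewrite A0e in maxA *.
suff <- : A0 = set0 by [].
by apply/seteqP; split => //; apply: maxA => //; right.
Qed.

Definition linmap (R : pzRingType) (U V : lmodType R) (f : U -> V) (fL : linear f) :
  {linear U -> V} := HB.pack f (GRing.isLinear.Build R U V *:%R f fL).

(** * Submodules *)

Section Submodules.
Variables (R : comNzRingType) (V : lmodType R).

Definition is_submod (Y : V -> Prop) : Prop :=
  [/\ Y 0, forall x y, Y x -> Y y -> Y (x + y) & forall r x, Y x -> Y (r *: x)].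

Record submod := Submod { submod_set :> V -> Prop; submodP : is_submod submod_set }.

Lemma submod0 (S : submod) : S 0.
Proof. by case: S => Y []. Qed.

Lemma submodD (S : submod) x y : S x -> S y -> S (x + y).
Proof. by case: S => Y [Y0 YD YZ]; apply: YD. Qed.

Lemma submodZ (S : submod) r x : S x -> S (r *: x).
Proof. by case: S => Y [Y0 YD YZ]; apply: YZ. Qed.

Lemma submodB (S : submod) x y : S x -> S y -> S (x - y).
Proof. by move=> Sx Sy; apply: submodD => //; rewrite -scaleN1r; apply: submodZ. Qed.

Lemma chain_union_submod (F : set (V -> Prop)) :
  (forall Y, F Y -> is_submod Y) -> total_on F subset -> F !=set0 ->
  is_submod (\bigcup_(Y in F) Y).
Proof.
move=> Fsub Ftot [Y0 FY0]; split.
- by exists Y0 => //; case: (Fsub _ FY0).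
- move=> x y [Y1 FY1 Y1x] [Y2 FY2 Y2y].
  have [Y12|Y21] := Ftot _ _ FY1 FY2.
    by exists Y2 => //; case: (Fsub _ FY2) => _ YD _; apply: YD => //; apply: Y12.
  by exists Y1 => //; case: (Fsub _ FY1) => _ YD _; apply: YD => //; apply: Y21.
- by move=> r x [Y FY Yx]; exists Y => //; case: (Fsub _ FY) => _ _ YZ; apply: YZ.
Qed.

Lemma Zorn_submod (P : (V -> Prop) -> Prop) (S0 : submod) :
  P S0 ->
  (forall F : set (V -> Prop), (forall Y, F Y -> is_submod Y /\ P Y) ->
     total_on F subset -> F !=set0 -> P (\bigcup_(Y in F) Y)) ->
  exists S : submod, P S /\
    forall Y, (forall x, S x -> Y x) -> is_submod Y -> P Y -> forall x, Y x -> S x.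
Proof.
move=> PS0 chainP.
have [||A [[Asub PA] Amax]] := @Zorn_nonempty_chains V (fun Y => is_submod Y /\ P Y) S0.
- by split => //; exact: submodP.
- move=> F FP Ftot Fne; split; last exact: chainP.
  by apply: chain_union_submod => // Y /FP [].
- by exists (Submod Asub); split => // Y AY Ysub PY; exact: Amax.
Qed.

Section Subtype.
Variable S : submod.

Definition submod_pred : {pred V} := fun x => `[< S x >].

Lemma submod_pred_closed : GRing.submod_closed submod_pred.
Proof.
split; first exact/asboolP/submod0.
move=> a x y /asboolP Sx /asboolP Sy; apply/asboolP.
by apply: submodD => //; apply: submodZ.
Qed.

HB.instance Definition _ := GRing.isSubmodClosed.Build R V submod_pred submod_pred_closed.

Definition submod_type : Type := {x : V | submod_pred x}.
HB.instance Definition _ := [isSub of submod_type for @sval V submod_pred].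
HB.instance Definition _ := [Choice of submod_type by <:].
HB.instance Definition _ := [SubChoice_isSubLmodule of submod_type by <:].

Definition submod_incl : {linear submod_type -> V} := val.

Lemma submod_incl_inj : injective submod_incl.
Proof. exact: val_inj. Qed.

Lemma submod_incl_mem (u : submod_type) : S (submod_incl u).
Proof. by apply/asboolP; exact: valP u. Qed.

Definition submod_elt (x : V) (Sx : S x) : submod_type := Sub x (asboolT Sx).

Lemma submod_eltK x (Sx : S x) : submod_incl (submod_elt Sx) = x.
Proof. by []. Qed.

End Subtype.
End Submodules.

Arguments submod_incl {R V S}.
Arguments submod_incl_inj {R V S}.
Arguments submod_incl_mem {R V S}.
Arguments submod_elt {R V S x}.

Section LinearSubmodules.
Variables (R : comNzRingType) (U V : lmodType R) (f : {linear U -> V}).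

Definition image_submod : submod V.
Proof.
refine (@Submod _ _ (fun y => exists x, f x = y) _); split.
- by exists 0; rewrite linear0.
- by move=> _ _ [x <-] [y <-]; exists (x + y); rewrite linearD.
- by move=> r _ [x <-]; exists (r *: x); rewrite linearZ.
Defined.

Definition kernel_submod : submod U.
Proof.
refine (@Submod _ _ (fun x => f x = 0) _); split.
- by rewrite linear0.
- by move=> x y fx fy; rewrite linearD fx fy addr0.
- by move=> r x fx; rewrite linearZ_LR fx scaler0.
Defined.

Lemma linear_injP : (forall x, f x = 0 -> x = 0) -> injective f.
Proof.
by move=> kf x y fxy; apply/eqP; rewrite -subr_eq0; apply/eqP/kf; rewrite linearB fxy subrr.
Qed.

End LinearSubmodules.

Definition zero_submod (R : comNzRingType) (V : lmodType R) : submod V.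
Proof.
refine (@Submod _ _ (fun x => x = 0) _); split => //.
- by move=> x y -> ->; rewrite addr0.
- by move=> r x ->; rewrite scaler0.
Defined.

Definition cyclic_submod (R : comNzRingType) (V : lmodType R) (m : V) : submod V.
Proof.
refine (@Submod _ _ (cyclic_sub m) _); split.
- by exists 0; rewrite scale0r.
- by move=> _ _ [r ->] [s ->]; exists (r + s); rewrite scalerDl.
- by move=> r _ [s ->]; exists (r * s); rewrite scalerA.
Defined.

(** * Supports, Gamma_Phi and associated primes *)

Section NoetherianMaximal.
Variables (R : comNzRingType) (hR : noetherian R).

Lemma noetherian_maximal (T : Type) (P : T -> Prop) (I : T -> R -> Prop) :
  (forall t, is_ideal (I t)) -> (exists t, P t) ->
  exists t, P t /\ forall t', P t' -> (forall a, I t a -> I t' a) -> forall a, I t' a -> I t a.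
Proof.
move=> Iid [t0 Pt0]; apply: contrapT => nomax.
have next (u : {t | P t}) : exists v : {t | P t},
    (forall a, I (sval u) a -> I (sval v) a) /\ ~ (forall a, I (sval v) a -> I (sval u) a).
  apply: contrapT => umax; apply: nomax; exists (sval u); split; first exact: svalP.
  move=> t' Pt' le; apply: contrapT => nge; apply: umax.
  by exists (exist _ t' Pt').
have [f fP] := choice next.
pose chain k := iter k f (exist _ t0 Pt0).
have [N stable] := hR (fun k => Iid (sval (chain k))) (fun k => proj1 (fP (chain k))).
by apply: (proj2 (fP (chain N))) => a; apply: (stable N.+1 a (leqnSn N)).
Qed.

End NoetherianMaximal.

Section Support.
Variable R : comNzRingType.
Implicit Types p : spec R.

Lemma spec_not1 p : ~ pmem p 1.
Proof. by case: p => P [? ? ?]. Qed.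

Lemma spec_mul_notin p a b : ~ pmem p a -> ~ pmem p b -> ~ pmem p (a * b).
Proof. by case: p => P [_ _ Pmul] /= Pa Pb /Pmul []. Qed.

(* [v/1 = 0] in the localization [V_p]. *)
Definition vanishes_at p (V : lmodType R) (v : V) := exists2 s, ~ pmem p s & s *: v = 0.

Lemma vanishes_atN p (V : lmodType R) (v : V) :
  (forall s, ~ pmem p s -> s *: v <> 0) <-> ~ vanishes_at p v.
Proof.
split=> [nv [s ps sv] | nv s ps sv]; first exact: nv ps sv.
by apply: nv; exists s.
Qed.

Lemma vanishes_at0 p (V : lmodType R) : vanishes_at p (0 : V).
Proof. by exists 1; [exact: spec_not1 | rewrite scaler0]. Qed.

Lemma vanishes_atD p (V : lmodType R) (x y : V) :
  vanishes_at p x -> vanishes_at p y -> vanishes_at p (x + y).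
Proof.
move=> [s1 ps1 s1x] [s2 ps2 s2y]; exists (s1 * s2); first exact: spec_mul_notin.
by rewrite scalerDr [X in X *: x]mulrC -!scalerA s1x s2y !scaler0 addr0.
Qed.

Lemma vanishes_at_linear p (U V : lmodType R) (f : {linear U -> V}) (x : U) :
  vanishes_at p x -> vanishes_at p (f x).
Proof. by move=> [s ps sx]; exists s; rewrite // -linearZ sx linear0. Qed.

Lemma in_SuppP p (V : lmodType R) (m : V) :
  in_Supp (cyclic_sub m) p <-> exists r, ~ vanishes_at p (r *: m).
Proof.
split=> [[_ [[r ->]] /vanishes_atN nv] | [r /vanishes_atN nv]]; first by exists r.
by exists (r *: m); split => //; exists r.
Qed.

End Support.

Section Gamma.
Variables (R : comNzRingType) (Phi : spec R -> Prop).

Lemma in_GammaP (V : lmodType R) (m : V) :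
  in_Gamma Phi m <-> forall p r, ~ vanishes_at p (r *: m) -> Phi p.
Proof.
split=> [Gm p r nv | Gm p /in_SuppP [r nv]]; last exact: Gm nv.
by apply: Gm; apply/in_SuppP; exists r.
Qed.

Lemma in_Gamma_linear (U V : lmodType R) (f : {linear U -> V}) (m : U) :
  in_Gamma Phi m -> in_Gamma Phi (f m).
Proof.
move=> /in_GammaP Gm; apply/in_GammaP => p r nv; apply: (Gm p r) => v.
by apply: nv; rewrite -linearZ; apply: vanishes_at_linear.
Qed.

Lemma in_Gamma_inj (U V : lmodType R) (f : {linear U -> V}) (m : U) :
  injective f -> in_Gamma Phi (f m) -> in_Gamma Phi m.
Proof.
move=> finj /in_GammaP Gm; apply/in_GammaP => p r nv; apply: (Gm p r) => -[s ps sv].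
by apply: nv; exists s => //; apply: finj; rewrite !linearZ /= sv linear0.
Qed.

Lemma in_Gamma0 (V : lmodType R) : in_Gamma Phi (0 : V).
Proof. by apply/in_GammaP => p r; rewrite scaler0 => /(_ (vanishes_at0 _ _)). Qed.

Lemma in_GammaZ (V : lmodType R) r (m : V) : in_Gamma Phi m -> in_Gamma Phi (r *: m).
Proof. by move=> /in_GammaP Gm; apply/in_GammaP => p t; rewrite scalerA; apply: Gm. Qed.

Lemma in_GammaD (V : lmodType R) (x y : V) :
  in_Gamma Phi x -> in_Gamma Phi y -> in_Gamma Phi (x + y).
Proof.
move=> /in_GammaP Gx /in_GammaP Gy; apply/in_GammaP => p r nv.
have [vx|] := pselect (vanishes_at p (r *: x)); last exact: Gx.
have [vy|] := pselect (vanishes_at p (r *: y)); last exact: Gy.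
by case: nv; rewrite scalerDr; apply: vanishes_atD.
Qed.

Definition Gamma_free (V : lmodType R) := forall x : V, in_Gamma Phi x -> x = 0.

Lemma Gamma_free_inj (U V : lmodType R) (f : {linear U -> V}) :
  injective f -> Gamma_free V -> Gamma_free U.
Proof. by move=> finj GV x Gx; apply: finj; rewrite linear0; apply: GV; apply: in_Gamma_linear. Qed.

Hypothesis hPhi : specialization_closed Phi.

Lemma Ass_in_Gamma (V : lmodType R) p : Ass V p -> Phi p ->
  exists2 m : V, m <> 0 & in_Gamma Phi m.
Proof.
move=> [m annm] Pp; exists m.
  by move=> m0; apply: (@spec_not1 _ p); apply/annm; rewrite m0 scaler0.
apply/in_GammaP => q r nv; apply: (hPhi Pp) => a /annm am0.
apply: contrapT => qa; apply: nv; exists a => //.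
by rewrite scalerA mulrC -scalerA am0 scaler0.
Qed.

Lemma Gamma_free_Ass (V : lmodType R) : Gamma_free V -> forall p, Ass V p -> ~ Phi p.
Proof. by move=> GV p /Ass_in_Gamma /[apply] -[m m0 /GV]. Qed.

Hypothesis hR : noetherian R.

Definition ann (V : lmodType R) (y : V) : R -> Prop := fun a => a *: y = 0.

Lemma ann_ideal (V : lmodType R) (y : V) : is_ideal (ann y).
Proof.
split; rewrite /ann; first by rewrite scale0r.
  by move=> a b ay uy; rewrite scalerDl ay uy addr0.
by move=> a b by0; rewrite -scalerA by0 scaler0.
Qed.

Lemma max_ann_prime (V : lmodType R) (x y : V) :
  (exists r, y = r *: x) -> y <> 0 ->
  (forall y', (exists r, y' = r *: x) /\ y' <> 0 ->
     (forall a, ann y a -> ann y' a) -> forall a, ann y' a -> ann y a) ->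
  is_prime_ideal (ann y).
Proof.
move=> [r ->] y0 ymax; split; [exact: ann_ideal | by rewrite /ann scale1r |].
move=> a b aby; have [ay|nay] := pselect (ann (r *: x) a); [by left | right].
have ayx : exists t, a *: (r *: x) = t *: x by exists (a * r); rewrite scalerA.
apply: (ymax _ (conj ayx nay)) => [c cy|]; last by rewrite /ann scalerA mulrC.
by rewrite /ann scalerA mulrC -scalerA cy scaler0.
Qed.

Lemma in_Gamma_Ass (V : lmodType R) (x : V) :
  in_Gamma Phi x -> x <> 0 -> exists p, Ass V p /\ Phi p.
Proof.
move=> Gx x0.
have [|y [[yx y0] ymax]] := noetherian_maximal hR
    (P := fun y => (exists r, y = r *: x) /\ y <> 0) (@ann_ideal V).
  by exists x; split => //; exists 1; rewrite scale1r.
pose p : spec R := exist _ (ann y) (max_ann_prime yx y0 ymax).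
exists p; split; first by exists y.
have /in_GammaP Gy : in_Gamma Phi y by have [r ->] := yx; apply: in_GammaZ.
by apply: (Gy p 1); rewrite scale1r => -[s ps /ps].
Qed.

Lemma Ass_Gamma_free (V : lmodType R) : (forall p, Ass V p -> ~ Phi p) -> Gamma_free V.
Proof.
move=> noAss x Gx; apply: contrapT => x0.
by have [p [Ap Pp]] := in_Gamma_Ass Gx x0; apply: (noAss p).
Qed.

End Gamma.

(** * Injective resolutions *)

Section DependentChoice.
Variables (X : nat -> Type) (Start : X 0%N -> Prop) (Inv : forall j, X j -> Prop)
  (Step : forall j, X j -> X j.+1 -> Prop).
Hypothesis start : exists2 x0, Start x0 & Inv x0.
Hypothesis step : forall j (x : X j), Inv x -> exists2 y, Step x y & Inv y.

Let x0 := cid2 start.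
Let next j (x : {x : X j | Inv x}) : {y | Step (sval x) y & Inv y} := cid2 (step (svalP x)).

Fixpoint dep_sequence j : {x : X j | Inv x} :=
  if j is j'.+1 then exist _ (s2val (next (dep_sequence j'))) (s2valP' (next _))
  else exist _ (s2val x0) (s2valP' x0).

Lemma nat_dependent_choice : exists f : forall j, X j,
  [/\ Start (f 0%N), forall j, Inv (f j) & forall j, Step (f j) (f j.+1)].
Proof.
exists (fun j => sval (dep_sequence j)); split; first exact: s2valP x0.
  by move=> j; exact: svalP.
by move=> j; exact: s2valP (next _).
Qed.

End DependentChoice.

Section InjectiveModules.
Variable R : comNzRingType.

Lemma injective_extend (X Y N : lmodType R) (d : {linear X -> Y}) (phi : {linear X -> N}) :
  injective_module N -> (forall x, d x = 0 -> phi x = 0) ->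
  exists psi : {linear Y -> N}, forall x, psi (d x) = phi x.
Proof.
move=> iN kerd.
pose pre (y : submod_type (image_submod d)) : X :=
  sval (cid (submod_incl_mem y)).
have preP y : d (pre y) = submod_incl y by rewrite /pre; case: cid.
have same x1 x2 : d x1 = d x2 -> phi x1 = phi x2.
  move=> e; apply/eqP; rewrite -subr_eq0 -linearB; apply/eqP/kerd.
  by rewrite linearB e subrr.
have preL : linear (fun y => phi (pre y)).
  by move=> a u v; rewrite -linearP; apply: same; rewrite linearP !preP linearP.
have [psi psiP] := iN _ _ _ (linmap preL) submod_incl_inj.
exists psi => x; have dx : image_submod d (d x) by exists x.
by rewrite -(submod_eltK dx) psiP /=; apply: same; rewrite preP.
Qed.

Arguments injective_extend {X Y N} d phi.

Section Resolution.
Variables (M : lmodType R) (I : nat -> lmodType R) (d : forall i, {linear I i -> I i.+1})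
  (eps : {linear M -> I 0%N}).
Hypothesis res : inj_resolution d eps.

Lemma res_eps_inj : injective eps. Proof. by case: res. Qed.
Lemma res_injective j : injective_module (I j). Proof. by case: res. Qed.
Lemma res_d_eps m : d 0%N (eps m) = 0. Proof. by case: res => _ h _ _; apply/h; exists m. Qed.
Lemma res_dd j x : d j.+1 (d j x) = 0. Proof. by case: res => _ _ h _; apply/h; exists x. Qed.
Lemma res_exact0 x : d 0%N x = 0 -> exists m, eps m = x. Proof. by case: res => _ h _ _ /h. Qed.
Lemma res_exactS j x : d j.+1 x = 0 -> exists y, d j y = x. Proof. by case: res => _ _ h _ /h. Qed.

End Resolution.

Arguments res_injective {M I d eps} res j.

Lemma resolution_map (M : lmodType R) (I I' : nat -> lmodType R)
  (d : forall i, {linear I i -> I i.+1}) (d' : forall i, {linear I' i -> I' i.+1})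
  (eps : {linear M -> I 0%N}) (eps' : {linear M -> I' 0%N}) :
  inj_resolution d eps -> inj_resolution d' eps' ->
  exists f : forall j, {linear I j -> I' j},
    (forall m, f 0%N (eps m) = eps' m) /\ (forall j x, f j.+1 (d j x) = d' j (f j x)).
Proof.
move=> r r'.
have [||f [f0 _ fd]] := @nat_dependent_choice (fun j => {linear I j -> I' j})
  (fun f => forall m, f (eps m) = eps' m)
  (fun j f => forall x, d j x = 0 -> d' j (f x) = 0)
  (fun j f f' => forall x, f' (d j x) = d' j (f x)).
- have [f0 f0P] := res_injective r' 0%N _ _ eps eps' (res_eps_inj r).
  by exists f0 => // x /(res_exact0 r) [m <-]; rewrite f0P (res_d_eps r').
- move=> j f fP; have [g gP] := injective_extend (d j) (d' j \o f) (res_injective r' j.+1) fP.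
  by exists g => // x /(res_exactS r) [y <-]; rewrite gP /= (res_dd r').
- by exists f.
Qed.

Lemma resolution_homotopy (M : lmodType R) (I : nat -> lmodType R)
  (d : forall i, {linear I i -> I i.+1}) (eps : {linear M -> I 0%N})
  (k : forall j, {linear I j -> I j}) :
  inj_resolution d eps ->
  (forall m, k 0%N (eps m) = 0) -> (forall j x, k j.+1 (d j x) = d j (k j x)) ->
  exists h : forall j, {linear I j.+1 -> I j},
    (forall x, h 0%N (d 0%N x) = k 0%N x) /\
    (forall j x, h j.+1 (d j.+1 x) = k j.+1 x - d j (h j x)).
Proof.
move=> r k_eps kd.
have [||h [h0 _ hS]] := @nat_dependent_choice (fun j => {linear I j.+1 -> I j})
  (fun h => forall x, h (d 0%N x) = k 0%N x)
  (fun j h => forall x, d j.+1 x = 0 -> k j.+1 x - d j (h x) = 0)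
  (fun j h h' => forall x, h' (d j.+1 x) = k j.+1 x - d j (h x)).
- have kd0 x : d 0%N x = 0 -> k 0%N x = 0 by move=> /(res_exact0 r) [m <-].
  have [h hP] := injective_extend (d 0%N) (k 0%N) (res_injective r 0%N) kd0.
  by exists h => // x /(res_exactS r) [y <-]; rewrite hP kd subrr.
- move=> j h hP.
  have [g gP] := injective_extend (d j.+1) (k j.+1 \- (d j \o h)) (res_injective r j.+1) hP.
  by exists g => // x /(res_exactS r) [y <-]; rewrite gP /= kd linearB (res_dd r) subr0 subrr.
- by exists h.
Qed.

Section Comparison.
Variable Phi : spec R -> Prop.

Lemma Gamma_coh_zero_transfer (M : lmodType R) (I I' : nat -> lmodType R)
  (d : forall i, {linear I i -> I i.+1}) (d' : forall i, {linear I' i -> I' i.+1})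
  (eps : {linear M -> I 0%N}) (eps' : {linear M -> I' 0%N}) i :
  inj_resolution d eps -> inj_resolution d' eps' ->
  Gamma_coh_zero Phi d' i -> Gamma_coh_zero Phi d i.
Proof.
move=> r r' coh'.
have [f [f_eps fd]] := resolution_map r r'.
have [g [g_eps gd]] := resolution_map r' r.
have [||h [h0 hS]] := resolution_homotopy (k := fun j => idfun \- (g j \o f j)) r.
- by move=> m /=; rewrite f_eps g_eps subrr.
- by move=> j x /=; rewrite fd gd linearB.
case: i coh' => [|j] /= coh' x Gx dx.
  have fx0 : f 0%N x = 0.
    by apply: coh'; [exact: in_Gamma_linear | rewrite -fd dx linear0].
  by have := h0 x; rewrite dx linear0 /= fx0 linear0 subr0.
have [y' [Gy' dy']] : exists y', in_Gamma Phi y' /\ d' j y' = f j.+1 x.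
  by apply: coh'; [exact: in_Gamma_linear | rewrite -fd dx linear0].
exists (h j x + g j y'); split; first by apply: in_GammaD; apply: in_Gamma_linear.
have kx : x - g j.+1 (f j.+1 x) = d j (h j x).
  by have := hS j x; rewrite dx linear0 /= => /esym/eqP; rewrite subr_eq0 => /eqP.
by rewrite linearD -gd dy' -kx subrK.
Qed.

Lemma H_Phi_zero_res (M : lmodType R) (I : nat -> lmodType R)
  (d : forall i, {linear I i -> I i.+1}) (eps : {linear M -> I 0%N}) i :
  inj_resolution d eps -> H_Phi_zero Phi M i <-> Gamma_coh_zero Phi d i.
Proof.
move=> r; split=> [HM|coh I' d' eps' r']; first exact: HM r.
exact: Gamma_coh_zero_transfer r' r coh.
Qed.

End Comparison.
End InjectiveModules.

(** * Enough injectives *)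

Definition frac (x : rat) : rat := x - (Num.floor x)%:~R.

Lemma frac_id x : 0 <= x < 1 -> frac x = x.
Proof. by move=> x01; rewrite /frac (@floor_def _ x 0) ?subr0 // add0r. Qed.

Lemma frac_itv x : 0 <= frac x < 1.
Proof.
have /andP [lex ltx] := floor_itv x.
by rewrite /frac subr_ge0 lex /= ltrBlDr addrC -[1]/(1%:~R) -intrD.
Qed.

Lemma fracK x : frac (frac x) = frac x.
Proof. exact: frac_id (frac_itv x). Qed.

Lemma fracDz x (k : int) : frac (x + k%:~R) = frac x.
Proof. by rewrite /frac floorDrz ?intr_int // intrKfloor intrD opprD addrACA subrr addr0. Qed.

Lemma fracDl x y : frac (frac x + y) = frac (x + y).
Proof. by rewrite -(fracDz (x + y) (- Num.floor x)) intrN addrAC. Qed.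

Lemma fracDr x y : frac (x + frac y) = frac (x + y).
Proof. by rewrite addrC fracDl addrC. Qed.

Lemma frac0 : frac 0 = 0.
Proof. by rewrite frac_id // lexx ltr01. Qed.

(* Q/Z, represented by the rationals in [0, 1). *)
Definition qz_pred : {pred rat} := fun x => frac x == x.
Definition qz : Type := {x : rat | qz_pred x}.
HB.instance Definition _ := [isSub of qz for @sval rat qz_pred].
HB.instance Definition _ := [Choice of qz by <:].

Definition qpi (x : rat) : qz := exist _ (frac x) (introT eqP (fracK x)).

Lemma qz_frac (t : qz) : frac (val t) = val t.
Proof. by apply/eqP; exact: valP t. Qed.

Lemma qpi_val (t : qz) : qpi (val t) = t.
Proof. by apply: val_inj; rewrite /= qz_frac. Qed.

Definition qz_add (t u : qz) : qz := qpi (val t + val u).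
Definition qz_opp (t : qz) : qz := qpi (- val t).

Lemma qz_addA : associative qz_add.
Proof. by move=> t u v; apply: val_inj; rewrite /= fracDl fracDr addrA. Qed.
Lemma qz_addC : commutative qz_add.
Proof. by move=> t u; apply: val_inj; rewrite /= addrC. Qed.
Lemma qz_add0 : left_id (qpi 0) qz_add.
Proof. by move=> t; apply: val_inj; rewrite /= frac0 add0r qz_frac. Qed.
Lemma qz_addN : left_inverse (qpi 0) qz_opp qz_add.
Proof. by move=> t; apply: val_inj; rewrite /= fracDl addNr. Qed.

HB.instance Definition _ := GRing.isZmodule.Build qz qz_addA qz_addC qz_add0 qz_addN.

Lemma qpi_zmod : zmod_morphism qpi.
Proof.
move=> x y; apply: val_inj; rewrite /= fracDl fracDr.
by rewrite [frac y]/frac opprB addrCA [_ + (x - y)]addrC fracDz.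
Qed.

HB.instance Definition _ := GRing.isZmodMorphism.Build rat qz qpi qpi_zmod.

Lemma qpi_eq0 x : (qpi x == 0) = (x \is a Num.int).
Proof.
by rewrite -(inj_eq val_inj) /= frac0 /frac subr_eq0 intrEfloor eq_sym.
Qed.

Lemma qz_divisible (t : qz) (n : nat) : (0 < n)%N -> exists u : qz, u *~ n = t.
Proof.
move=> n0; exists (qpi (val t / n%:R)); rewrite -raddfMz -mulrzr.
rewrite -[(n : int)%:~R]/(n%:R) mulfVK; first exact: qpi_val.
by rewrite pnatr_eq0 -lt0n.
Qed.

Lemma qz_torsion (n : nat) : (1 < n)%N -> exists2 u : qz, u *~ n = 0 & u <> 0.
Proof.
move=> n1; have n0 : (n%:R : rat) != 0 by rewrite pnatr_eq0 -lt0n ltnW.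
exists (qpi n%:R^-1).
  by rewrite -raddfMz -mulrzr -[(n : int)%:~R]/(n%:R) mulVf //; apply/eqP; rewrite qpi_eq0.
have n_gt0 : 0 < (n%:R^-1 : rat) by rewrite invr_gt0 ltr0n ltnW.
have n_lt1 : (n%:R^-1 : rat) < 1 by rewrite invf_lt1 ?ltr0n ?ltr1n // ltnW.
have fl : Num.floor (n%:R^-1 : rat) = 0.
  by apply: floor_def; rewrite add0r mulr0z mulr1z (ltW n_gt0) n_lt1.
move/eqP; rewrite qpi_eq0 intrEfloor fl mulr0z => /eqP n0'.
by move: n_gt0; rewrite -n0' ltxx.
Qed.

Section PartialHomExtension.
Variables B D : zmodType.
Hypothesis D_divisible : forall (t : D) (n : nat), (0 < n)%N -> exists u : D, u *~ n = t.
Implicit Types G : B -> D -> Prop.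

(* G is the graph of a homomorphism from a subgroup of B to D. *)
Definition partial_hom G := [/\ G 0 0,
  forall x t y u, G x t -> G y u -> G (x - y) (t - u) & forall t, G 0 t -> t = 0].

Section Graph.
Variable G : B -> D -> Prop.
Hypothesis Ghom : partial_hom G.

Lemma partial_homN x t : G x t -> G (- x) (- t).
Proof. by case: Ghom => G0 GB _ Gxt; have := GB _ _ _ _ G0 Gxt; rewrite !sub0r. Qed.

Lemma partial_homD x t y u : G x t -> G y u -> G (x + y) (t + u).
Proof.
case: Ghom => _ GB _ Gxt /partial_homN Gyu.
by have := GB _ _ _ _ Gxt Gyu; rewrite !opprK.
Qed.

Lemma partial_homMz x t k : G x t -> G (x *~ k) (t *~ k).
Proof.
move=> Gxt; have Gn n : G (x *+ n) (t *+ n).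
  by elim: n => [|n IHn]; [rewrite !mulr0n; case: Ghom | rewrite !mulrS; apply: partial_homD].
by case: k => n; rewrite ?NegzE ?mulrNz; [| apply: partial_homN]; rewrite -!pmulrn.
Qed.

Lemma partial_hom_uniq x t u : G x t -> G x u -> t = u.
Proof.
case: Ghom => _ GB Gfun Gxt Gxu; apply/eqP; rewrite -subr_eq0; apply/eqP/Gfun.
by rewrite -(subrr x); apply: GB.
Qed.

Lemma partial_hom_multiples b :
  (forall k t, G (b *~ k) t -> k = 0) \/
  exists n : nat, [/\ (0 < n)%N, exists t, G (b *~ n) t &
     forall k t, G (b *~ k) t -> (n %| k)%Z].
Proof.
have [[k [t [Gkt k0]]]|none] := pselect (exists k t, G (b *~ k) t /\ k != 0); last first.
  left => k t Gkt; apply/eqP; apply: contrapT => k0; apply: none; exists k, t.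
  by split => //; apply/negP.
right; pose P n := (0 < n)%N && `[< exists t, G (b *~ n) t >].
have exP : exists n, P n.
  exists `|k|%N; rewrite /P absz_gt0 k0; apply/asboolP.
  have [k_ge0|k_lt0] := lerP 0 k; first by exists t; rewrite gez0_abs.
  by exists (- t); rewrite ltz0_abs // mulrNz; apply: partial_homN.
case: (ex_minnP exP) => n /andP [n_gt0 /asboolP [tn Gn]] nmin.
exists n; split => // [|k' t' Gk']; first by exists tn.
apply/dvdz_mod0P; set r := (k' %% n)%Z.
have r_ge0 : 0 <= r by apply: modz_ge0; rewrite eqz_nat -lt0n.
have r_lt : r < n by apply: ltz_pmod; rewrite ltz_nat.
have Gr : G (b *~ r) (t' - tn *~ (k' %/ n)%Z).
  have -> : b *~ r = b *~ k' - (b *~ n) *~ (k' %/ n)%Z.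
    by rewrite -mulrzA -mulrzBr /r {2}(divz_eq k' n) mulrC addrAC subrr add0r.
  by case: Ghom => _ GB _; apply: GB => //; apply: partial_homMz.
apply: contrapT => /eqP r0.
have /nmin : P `|r|%N.
  by rewrite /P absz_gt0 r0; apply/asboolP; exists (t' - tn *~ (k' %/ n)%Z); rewrite gez0_abs.
by rewrite -lez_nat gez0_abs // leNgt r_lt.
Qed.

Lemma partial_hom_point b : exists tau : D, forall k t, G (b *~ k) t -> t = tau *~ k.
Proof.
case: (partial_hom_multiples b) => [only0|[n [n_gt0 [tn Gn] ndvd]]].
  exists 0 => k t Gkt; rewrite mul0rz; case: Ghom => _ _ Gfun; apply: Gfun.
  by rewrite -(mulr0z b) -(only0 _ _ Gkt).
have [tau taun] := D_divisible tn n_gt0.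
exists tau => k t Gkt; have [q kq] := dvdzP (ndvd _ _ Gkt); rewrite kq in Gkt *.
have Gq : G (b *~ (q * n)) (tn *~ q) by rewrite mulrC mulrzA; apply: partial_homMz.
by rewrite (partial_hom_uniq Gkt Gq) -taun -mulrzA mulrC.
Qed.

Definition adjoin_point b tau : B -> D -> Prop :=
  fun x t => exists y u k, [/\ G y u, x = y + b *~ k & t = u + tau *~ k].

Lemma adjoin_point_sub b tau x t : G x t -> adjoin_point b tau x t.
Proof. by move=> Gxt; exists x, t, 0; rewrite !mulr0z !addr0. Qed.

Lemma adjoin_point_at b tau : adjoin_point b tau b tau.
Proof. by exists 0, 0, 1; rewrite !mulr1z !add0r; split => //; case: Ghom. Qed.

Lemma adjoin_point_hom b tau :
  (forall k t, G (b *~ k) t -> t = tau *~ k) -> partial_hom (adjoin_point b tau).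
Proof.
case: Ghom => G0 GB _ tauP; split; first exact: adjoin_point_sub.
  move=> _ _ _ _ [y1 [u1 [k1 [G1 -> ->]]]] [y2 [u2 [k2 [G2 -> ->]]]].
  exists (y1 - y2), (u1 - u2), (k1 - k2); split; first exact: GB.
    by rewrite mulrzBr opprD addrACA.
  by rewrite mulrzBr opprD addrACA.
move=> _ [y [u [k [Gyu /esym/eqP y_bk ->]]]].
move: (partial_homN Gyu); move: y_bk; rewrite addr_eq0 => /eqP ->; rewrite opprK => Gbk.
by rewrite -(tauP _ _ Gbk) subrr.
Qed.

End Graph.

Lemma chain_union_partial_hom (F : set (set (B * D))) :
  (forall X, F X -> partial_hom (fun x t => X (x, t))) -> total_on F subset ->
  F !=set0 -> partial_hom (fun x t => (\bigcup_(X in F) X) (x, t)).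
Proof.
move=> Fhom Ftot [X0 FX0]; split.
- by exists X0 => //; case: (Fhom _ FX0).
- move=> x t y u [X1 FX1 X1xt] [X2 FX2 X2yu].
  have [X12|X21] := Ftot _ _ FX1 FX2.
    by exists X2 => //; case: (Fhom _ FX2) => _ XB _; apply: XB => //; apply: X12.
  by exists X1 => //; case: (Fhom _ FX1) => _ XB _; apply: XB => //; apply: X21.
- by move=> t [X FX Xt]; case: (Fhom _ FX) => _ _; apply.
Qed.

Lemma partial_hom_extend G0 : partial_hom G0 ->
  exists h : B -> D, zmod_morphism h /\ forall x t, G0 x t -> h x = t.
Proof.
move=> G0hom.
pose P (X : set (B * D)) := partial_hom (fun x t => X (x, t)) /\ forall x t, G0 x t -> X (x, t).
have [||A [[Ahom G0A] Amax]] := @Zorn_nonempty_chains _ P (fun p => G0 p.1 p.2).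
- by split.
- move=> F FP Ftot [X FX]; split.
    by apply: chain_union_partial_hom => //; [move=> Y /FP [] | exists X].
  by move=> x t G0xt; exists X => //; apply: (FP X FX).2.
have Atot b : exists t, A (b, t).
  have [tau tauP] := partial_hom_point Ahom b; exists tau.
  pose A' (p : B * D) := adjoin_point (fun x t => A (x, t)) b tau p.1 p.2.
  apply: (Amax A' _ _ (b, tau)); last exact: adjoin_point_at.
    by case=> x t; apply: adjoin_point_sub.
  by split; [exact: adjoin_point_hom | move=> x t /G0A; apply: adjoin_point_sub].
have [h hP] := choice Atot.
have Auniq := partial_hom_uniq (G := fun x t => A (x, t)) Ahom.
exists h; split => [x y|x t /G0A]; last exact: Auniq (hP x).
by case: Ahom => _ AB _; apply: Auniq (hP (x - y)) (AB _ _ _ _ (hP x) (hP y)).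
Qed.

End PartialHomExtension.

Lemma zmod_morphismD (U V : zmodType) (f : U -> V) :
  zmod_morphism f -> forall x y, f (x + y) = f x + f y.
Proof. by move=> fB; exact: raddfD (HB.pack f (GRing.isZmodMorphism.Build U V f fB)). Qed.

Section CharacterModule.
Variables (R : comNzRingType) (M : lmodType R) (C : submod M).

Definition char_hom := {phi : M -> qz | zmod_morphism phi /\ forall c, C c -> phi c = 0}.

Lemma char_hom_separates (m : M) : ~ C m -> exists phi : char_hom, sval phi m <> 0.
Proof.
move=> Cm; pose G (x : M) (t : qz) := C x /\ t = 0.
have Ghom : partial_hom G.
  split; [by split; [exact: submod0|] | | by move=> t []].
  by move=> x t y u [Cx ->] [Cy ->]; split; [exact: submodB | rewrite subrr].
(* The image of m must be nonzero, with order dividing the order of m modulo C. *)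
have [tau tau0 tauP] : exists2 tau : qz, tau <> 0 & forall k t, G (m *~ k) t -> t = tau *~ k.
  case: (partial_hom_multiples Ghom m) => [only0|[n [n_gt0 [_ [Cn _]] ndvd]]].
    have [tau _ tau0] := qz_torsion (isT : (1 < 2)%N).
    by exists tau => // k t Gkt; rewrite (only0 _ _ Gkt) mulr0z; case: Gkt.
  have n_gt1 : (1 < n)%N.
    rewrite ltn_neqAle n_gt0 andbT; apply/eqP => n1; apply: Cm.
    by move: Cn; rewrite -n1 mulr1z.
  have [tau taun tau0] := qz_torsion n_gt1.
  exists tau => // k t Gkt; have [q ->] := dvdzP (ndvd _ _ Gkt).
  by rewrite mulrC mulrzA taun mul0rz; case: Gkt.
have [h [hB hG]] := partial_hom_extend qz_divisible (adjoin_point_hom Ghom tauP).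
have hC c : C c -> h c = 0 by move=> Cc; apply: hG; apply: adjoin_point_sub.
by exists (exist _ h (conj hB hC)); rewrite /= (hG _ _ (adjoin_point_at Ghom m tau)).
Qed.

(* The product, over the characters phi of M/C, of Hom_Z(R, Q/Z), on which r acts by
   [(r F) phi a = F phi (a * r)]. *)
Definition char_module_type := {F : char_hom -> R -> qz | forall phi, zmod_morphism (F phi)}.

HB.instance Definition _ := gen_eqMixin char_module_type.
HB.instance Definition _ := gen_choiceMixin char_module_type.

Lemma char_module_ext (F G : char_module_type) :
  (forall phi a, sval F phi a = sval G phi a) -> F = G.
Proof.
case: F G => [F FB] [G GB] /= FG.
have eFG : F = G by apply/funext => phi; apply/funext => a; apply: FG.
by subst G; congr exist; apply: Prop_irrelevance.
Qed.

Definition char_module_of (F : char_hom -> R -> qz) (FB : forall phi, zmod_morphism (F phi)) :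
  char_module_type := exist _ F FB.

Lemma char_module_zero_subproof (phi : char_hom) : zmod_morphism (fun _ : R => 0 : qz).
Proof. by move=> a b; rewrite subrr. Qed.

Lemma char_module_add_subproof (F G : char_module_type) (phi : char_hom) :
  zmod_morphism (fun a => sval F phi a + sval G phi a).
Proof. by move=> a b; rewrite (svalP F) (svalP G) opprD addrACA. Qed.

Lemma char_module_opp_subproof (F : char_module_type) (phi : char_hom) :
  zmod_morphism (fun a => - sval F phi a).
Proof. by move=> a b; rewrite (svalP F) opprB opprK addrC. Qed.

Lemma char_module_scale_subproof r (F : char_module_type) (phi : char_hom) :
  zmod_morphism (fun a => sval F phi (a * r)).
Proof. by move=> a b; rewrite mulrBl (svalP F). Qed.

Definition char_module_zero := char_module_of char_module_zero_subproof.
Definition char_module_add F G := char_module_of (char_module_add_subproof F G).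
Definition char_module_opp F := char_module_of (char_module_opp_subproof F).
Definition char_module_scale r F := char_module_of (char_module_scale_subproof r F).

Lemma char_module_addA : associative char_module_add.
Proof. by move=> F G H; apply: char_module_ext => phi a /=; rewrite addrA. Qed.
Lemma char_module_addC : commutative char_module_add.
Proof. by move=> F G; apply: char_module_ext => phi a /=; rewrite addrC. Qed.
Lemma char_module_add0 : left_id char_module_zero char_module_add.
Proof. by move=> F; apply: char_module_ext => phi a /=; rewrite add0r. Qed.
Lemma char_module_addN : left_inverse char_module_zero char_module_opp char_module_add.
Proof. by move=> F; apply: char_module_ext => phi a /=; rewrite addNr. Qed.

HB.instance Definition _ := GRing.isZmodule.Build char_module_type
  char_module_addA char_module_addC char_module_add0 char_module_addN.

Lemma char_module_scaleA a b F :
  char_module_scale a (char_module_scale b F) = char_module_scale (a * b) F.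
Proof. by apply: char_module_ext => phi s /=; rewrite mulrA. Qed.
Lemma char_module_scale1 : left_id 1 char_module_scale.
Proof. by move=> F; apply: char_module_ext => phi s /=; rewrite mulr1. Qed.
Lemma char_module_scaleDr : right_distributive char_module_scale +%R.
Proof. by move=> a F G; apply: char_module_ext. Qed.
Lemma char_module_scaleDl F : {morph char_module_scale^~ F : a b / a + b}.
Proof.
by move=> a b; apply: char_module_ext => phi s /=; rewrite mulrDr (zmod_morphismD (svalP F _)).
Qed.

HB.instance Definition _ := GRing.Zmodule_isLmodule.Build R char_module_type
  char_module_scaleA char_module_scale1 char_module_scaleDr char_module_scaleDl.

Definition char_module : lmodType R := char_module_type.

Lemma char_of_elt_subproof (m : M) (phi : char_hom) : zmod_morphism (fun a => sval phi (a *: m)).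
Proof. by move=> a b; rewrite scalerBl (proj1 (svalP phi)). Qed.

Definition char_of_elt (m : M) : char_module := char_module_of (char_of_elt_subproof m).

Lemma char_of_elt_linear : linear char_of_elt.
Proof.
move=> r x y; apply: char_module_ext => phi a /=.
by rewrite scalerDr (zmod_morphismD (proj1 (svalP phi))) scalerA.
Qed.

Definition char_map : {linear M -> char_module} := linmap char_of_elt_linear.

Lemma char_map_eq0 m : char_map m = 0 <-> C m.
Proof.
split=> [m0|Cm]; last first.
  by apply: char_module_ext => phi a /=; apply: (proj2 (svalP phi)); apply: submodZ.
apply: contrapT => /char_hom_separates [phi]; apply.
by have := congr1 (fun F : char_module => sval F phi 1) m0; rewrite /= scale1r.
Qed.

Lemma char_module_injective : injective_module char_module.
Proof.
move=> A B f g finj.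
have ext (phi : char_hom) : exists psi : B -> qz,
    zmod_morphism psi /\ forall a, psi (f a) = sval (g a) phi 1.
  pose G x t := exists a, x = f a /\ t = sval (g a) phi 1.
  have Ghom : partial_hom G.
    split; first by exists 0; rewrite !linear0.
      by move=> _ _ _ _ [a [-> ->]] [a' [-> ->]]; exists (a - a'); rewrite !linearB.
    move=> _ [a [fa ->]]; have -> : a = 0 by apply: finj; rewrite -fa linear0.
    by rewrite linear0.
  have [psi [psiB psiG]] := partial_hom_extend qz_divisible Ghom.
  by exists psi; split => // a; apply: psiG; exists a.
have [psi psiP] := choice ext.
have hB b phi : zmod_morphism (fun s => psi phi (s *: b)).
  by move=> s t; rewrite scalerBl (proj1 (psiP phi)).
pose h b : char_module := char_module_of (hB b).
have hL : linear h.
  move=> r x y; apply: char_module_ext => phi s /=.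
  by rewrite scalerDr (zmod_morphismD (proj1 (psiP phi))) scalerA.
exists (linmap hL) => a; apply: char_module_ext => phi s /=.
by rewrite -linearZ (proj2 (psiP phi)) linearZ /= mul1r.
Qed.

End CharacterModule.

Lemma enough_injectives (R : comNzRingType) (M : lmodType R) (C : submod M) :
  exists (J : lmodType R) (q : {linear M -> J}), injective_module J /\ forall x, q x = 0 <-> C x.
Proof.
exists (char_module C), (char_map C).
by split; [exact: char_module_injective | exact: char_map_eq0].
Qed.

Section ResolutionExists.
Variables (R : comNzRingType) (M : lmodType R).

Record res_step := ResStep { step_src : lmodType R; step_tgt : lmodType R;
  step_map : {linear step_src -> step_tgt} }.

Section Embedding.
Variables (X : lmodType R) (C : submod X).

Definition embed_tgt : lmodType R := sval (cid (enough_injectives C)).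
Definition embed_map : {linear X -> embed_tgt} := sval (cid (svalP (cid (enough_injectives C)))).

Lemma embed_mapP : injective_module embed_tgt /\ forall x, embed_map x = 0 <-> C x.
Proof. exact: svalP (cid (svalP (cid (enough_injectives C)))). Qed.

Definition embed_mod : res_step := ResStep embed_map.

End Embedding.

Fixpoint res_steps j : res_step :=
  if j is j'.+1 then embed_mod (image_submod (step_map (res_steps j')))
  else embed_mod (zero_submod M).

Definition res_mod j := step_tgt (res_steps j).
Definition res_d j : {linear res_mod j -> res_mod j.+1} := step_map (res_steps j.+1).
Definition res_eps : {linear M -> res_mod 0%N} := step_map (res_steps 0%N).

Lemma inj_resolution_exists : inj_resolution res_d res_eps.
Proof.
split.
- by apply: linear_injP => x /(embed_mapP (zero_submod M)).2.
- by move=> x; exact: (embed_mapP _).2.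
- by move=> i x; exact: (embed_mapP _).2.
- by case=> [|j]; apply: (embed_mapP _).1.
Qed.

End ResolutionExists.

(** * Dimension shifting *)

Section LocalCohomologyVanishing.
Variables (R : comNzRingType) (Phi : spec R -> Prop).

Lemma H_Phi_zero0 (M : lmodType R) : H_Phi_zero Phi M 0 <-> Gamma_free Phi M.
Proof.
have r := inj_resolution_exists M; rewrite (H_Phi_zero_res _ _ r).
split=> /= [coh x Gx | GM x Gx /(res_exact0 r) [m em]].
  apply: (res_eps_inj r); rewrite linear0.
  by apply: coh; [exact: in_Gamma_linear | rewrite res_d_eps].
have Gm : in_Gamma Phi m by apply: (in_Gamma_inj (res_eps_inj r)); rewrite em.
by rewrite -em (GM m Gm) linear0.
Qed.

Section DimensionShift.
Variables (A E B : lmodType R) (al : {linear A -> E}) (be : {linear E -> B}).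
Hypotheses (al_inj : injective al) (be_surj : forall b, exists e, be e = b).
Hypothesis exact_E : forall e, be e = 0 <-> exists a, al a = e.
Hypotheses (E_inj : injective_module E) (E_free : Gamma_free Phi E).

Section Splice.
Variables (I : nat -> lmodType R) (d : forall i, {linear I i -> I i.+1})
  (eps : {linear B -> I 0%N}).
Hypothesis res : inj_resolution d eps.

Definition splice_mod (j : nat) : lmodType R := if j is j'.+1 then I j' else E.

Definition splice_d (j : nat) : {linear splice_mod j -> splice_mod j.+1} :=
  if j is j'.+1 return {linear splice_mod j -> splice_mod j.+1} then d j' else eps \o be.

Lemma splice_resolution : inj_resolution splice_d al.
Proof.
split => //.
- move=> x /=; rewrite -exact_E; split=> [|->]; last by rewrite linear0.
  by rewrite -(linear0 eps) => /(res_eps_inj res).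
- case=> [|i] x /=; last by split=> [/(res_exactS res)|[y <-]]; last exact: res_dd res _ _.
  split=> [/(res_exact0 res) [b <-]|[y <-]]; last exact: res_d_eps res _.
  by have [e <-] := be_surj b; exists e.
- by case=> [|j] //=; exact: res_injective res j.
Qed.

Lemma splice_Gamma_coh_zero i : Gamma_coh_zero Phi splice_d i.+1 <-> Gamma_coh_zero Phi d i.
Proof.
case: i => [|i] //=; split=> coh x Gx dx.
  by have [y [/E_free -> <-]] := coh x Gx dx; rewrite !linear0.
by exists 0; split; [exact: in_Gamma0 | rewrite (coh x Gx dx) !linear0].
Qed.

End Splice.

Lemma H_Phi_zero_shift i : H_Phi_zero Phi A i.+1 <-> H_Phi_zero Phi B i.
Proof.
have r := inj_resolution_exists B.
by rewrite (H_Phi_zero_res _ _ (splice_resolution r)) splice_Gamma_coh_zero (H_Phi_zero_res _ _ r).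
Qed.

End DimensionShift.
End LocalCohomologyVanishing.

(** * Injective envelopes with Gamma_Phi = 0 *)

Section Retracts.
Variables (R : comNzRingType) (E : lmodType R).

Lemma retract_injective (S : submod E) (psi : {linear E -> E}) :
  injective_module E -> (forall x, S (psi x)) -> (forall s, S s -> psi s = s) ->
  injective_module (submod_type S).
Proof.
move=> iE psiS psi_id A B f g finj.
have [h hP] := iE _ _ f (submod_incl \o g) finj.
pose h' b : submod_type S := submod_elt (psiS (h b)).
have h'L : linear h' by move=> r x y; apply: val_inj; rewrite /= !linearP.
exists (linmap h'L) => a; apply: val_inj.
by rewrite /= hP /= psi_id //; exact: submod_incl_mem.
Qed.

Definition sum_submod (H K : submod E) : submod E.
Proof.
refine (@Submod _ _ (fun e => exists h k, [/\ H h, K k & e = h + k]) _); split.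
- by exists 0, 0; rewrite addr0; split => //; exact: submod0.
- move=> _ _ [h1 [k1 [H1 K1 ->]]] [h2 [k2 [H2 K2 ->]]].
  by exists (h1 + h2), (k1 + k2); rewrite addrACA; split => //; exact: submodD.
- move=> r _ [h [k [Hh Kk ->]]].
  by exists (r *: h), (r *: k); rewrite scalerDr; split => //; exact: submodZ.
Defined.

Lemma direct_sum_projection (H K : submod E) :
  injective_module E -> (forall x, H x -> K x -> x = 0) ->
  exists psi : {linear E -> E}, (forall h, H h -> psi h = h) /\ (forall k, K k -> psi k = 0).
Proof.
move=> iE HK0; pose S := sum_submod H K.
have split_uniq h k h' k' : H h -> K k -> H h' -> K k' -> h + k = h' + k' -> h = h'.
  move=> Hh Kk Hh' Kk' e; apply/eqP; rewrite -subr_eq0; apply/eqP/HK0; first exact: submodB.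
  suff -> : h - h' = k' - k by exact: submodB.
  by apply/eqP; rewrite subr_eq addrAC eq_sym subr_eq addrC e.
pose proj (s : submod_type S) := sval (cid (submod_incl_mem s)).
have projP s : exists k, [/\ H (proj s), K k & submod_incl s = proj s + k].
  by rewrite /proj; case: cid.
have projE s h k : H h -> K k -> submod_incl s = h + k -> proj s = h.
  move=> Hh Kk e; have [k' [Hp Kk' e']] := projP s.
  by apply: (split_uniq _ _ _ _ Hp Kk' Hh Kk); rewrite -e' -e.
have projL : linear proj.
  move=> r s1 s2; have [k1 [H1 K1 e1]] := projP s1; have [k2 [H2 K2 e2]] := projP s2.
  apply: (projE _ _ (r *: k1 + k2)).
  - by apply: submodD => //; exact: submodZ.
  - by apply: submodD => //; exact: submodZ.
  - by rewrite linearP e1 e2 scalerDr addrACA.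
have [psi psiP] := iE _ _ _ (linmap projL) submod_incl_inj.
exists psi; split=> [h Hh|k Kk].
  have Sh : S h by exists h, 0; rewrite addr0; split => //; exact: submod0.
  rewrite -(submod_eltK Sh) psiP /=.
  by apply: (projE _ _ 0) => //; [exact: submod0 | rewrite addr0].
have Sk : S k by exists 0, k; rewrite add0r; split => //; exact: submod0.
rewrite -(submod_eltK Sk) psiP /=.
by apply: (projE _ _ k) => //; [exact: submod0 | rewrite add0r].
Qed.

End Retracts.

Section EssentialExtensions.
Variables (R : comNzRingType) (E : lmodType R).
Implicit Types Q Y : E -> Prop.

Definition essential_over Q Y := forall x, Y x -> x <> 0 -> exists r, r *: x <> 0 /\ Q (r *: x).

Lemma max_essential_retract Q (H : submod E) :
  injective_module E -> (forall x, Q x -> H x) -> essential_over Q H ->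
  (forall Y, (forall x, H x -> Y x) -> is_submod Y -> essential_over Q Y -> forall x, Y x -> H x) ->
  exists psi : {linear E -> E}, (forall x, H (psi x)) /\ (forall h, H h -> psi h = h).
Proof.
move=> iE QH essH Hmax.
have [||K [KH Kmax]] := @Zorn_submod _ _ (fun Y => forall x, Y x -> H x -> x = 0) (zero_submod E).
- by [].
- by move=> F FP _ _ x [Y FY Yx]; exact: (FP Y FY).2 x Yx.
have [psi [psi_id psiK]] := direct_sum_projection iE (fun x Hx Kx => KH x Kx Hx).
exists psi; split=> // e.
(* K is a maximal complement of H, so it is exactly the kernel of psi. *)
have kerK x : psi x = 0 -> K x.
  by apply: (Kmax _ _ (submodP (kernel_submod psi))) => [k /psiK | y /= psiy /psi_id <-].
apply: (Hmax _ _ (submodP (image_submod psi))); [by move=> h /psi_id <-; exists h | | by exists e].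
move=> _ [x <-] psix0.
have [z [[k [_ [Kk [r ->] ->]]] Hz z0]] :
    exists z, [/\ sum_submod K (cyclic_submod x) z, H z & z <> 0].
  apply: contrapT => noz; apply: psix0; apply/psiK.
  apply: (Kmax _ _ (submodP (sum_submod K (cyclic_submod x)))).
  - by move=> k Kk; exists k, 0; rewrite addr0; split => //; exact: submod0.
  - by move=> y Sy Hy; apply: contrapT => y0; apply: noz; exists y.
  - by exists 0, x; rewrite add0r; split; [exact: submod0 | exists 1; rewrite scale1r |].
have rpsix : r *: psi x = k + r *: x by rewrite -linearZ -[RHS]psi_id // linearD psiK // add0r.
have [s [sz Qsz]] := essH _ Hz z0.
by exists (s * r); rewrite -scalerA rpsix.
Qed.

End EssentialExtensions.

Lemma Gamma_free_envelope (R : comNzRingType) (Phi : spec R -> Prop) (B : lmodType R) :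
  Gamma_free Phi B -> exists (E : lmodType R) (al : {linear B -> E}),
    [/\ injective al, injective_module E & Gamma_free Phi E].
Proof.
move=> GB; have [E0 [q [iE0 qker]]] := enough_injectives (zero_submod B).
have q_inj : injective q by apply: linear_injP => x /qker.
pose Q := image_submod q.
have [||H [[QH essH] Hmax]] :=
  Zorn_submod (P := fun Y => (forall x, Q x -> Y x) /\ essential_over Q Y) (S0 := Q).
- by split => // _ [b <-] qb0; exists 1; rewrite scale1r; split => //; exists b.
- move=> F FP _ [Y0 FY0]; split; first by move=> x Qx; exists Y0 => //; apply: (FP _ FY0).2.1.
  by move=> x [Y FY Yx]; apply: (FP _ FY).2.2.
have [psi [psiH psi_id]] :
    exists psi : {linear E0 -> E0}, (forall x, H (psi x)) /\ (forall h, H h -> psi h = h).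
  apply: (max_essential_retract iE0 QH essH) => Y HY Ysub essY.
  by apply: Hmax => //; split => // x /QH /HY.
pose al b : submod_type H := submod_elt (QH _ (ex_intro _ b erefl)).
have alL : linear al by move=> r x y; apply: val_inj; rewrite /= linearP.
have al_inj : injective (linmap alL) by move=> x y /(congr1 val) /q_inj.
exists (submod_type H), (linmap alL); split => //; first exact: retract_injective iE0 psiH psi_id.
move=> x Gx; apply: contrapT => x0.
have [r [rx0 [b qb]]] : exists r, r *: submod_incl x <> 0 /\ Q (r *: submod_incl x).
  by apply: essH; [exact: submod_incl_mem | move=> x_0; apply: x0; apply: val_inj].
have alb : linmap alL b = r *: x by apply: val_inj; rewrite /= qb.
have /GB b0 : in_Gamma Phi b by apply: in_Gamma_inj al_inj _; rewrite alb; exact: in_GammaZ.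
by apply: rx0; rewrite -qb b0 linear0.
Qed.

(** * Coherence *)

Section Corestriction.
Variables (R : comNzRingType) (X Y : lmodType R) (g : {linear X -> Y}) (S : submod Y).
Hypothesis gS : forall x, S (g x).

Lemma corestrict_linear : linear (fun x => submod_elt (gS x)).
Proof. by move=> r x y; apply: val_inj; rewrite /= linearP. Qed.

Definition corestrict : {linear X -> submod_type S} := linmap corestrict_linear.

Lemma corestrict_eq0 x : corestrict x = 0 <-> g x = 0.
Proof. by split=> [/(congr1 submod_incl)|gx0]; last apply: val_inj. Qed.

End Corestriction.

Section Cokernel.
Variables (R : comNzRingType) (X Y : lmodType R) (f : {linear X -> Y}).

Lemma cokernel_exists : exists (Z : lmodType R) (c : {linear Y -> Z}),
  (forall z, exists y, c y = z) /\ (forall y, c y = 0 <-> exists x, f x = y).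
Proof.
have [J [q [_ q_ker]]] := enough_injectives (image_submod f).
have qS y : image_submod q (q y) by exists y.
exists _, (corestrict qS); split=> [z|y]; last by rewrite corestrict_eq0; exact: q_ker.
by have [y qy] := submod_incl_mem z; exists y; apply: val_inj.
Qed.

Lemma kernel_corestrict (Z : lmodType R) (g : {linear Y -> Z}) :
  (forall y, g y = 0 <-> exists x, f x = y) ->
  exists c : {linear X -> submod_type (kernel_submod g)},
    (forall k, exists x, c x = k) /\
    (forall x, c x = 0 <-> exists a : submod_type (kernel_submod f), submod_incl a = x).
Proof.
move=> exact_Y; have fS x : kernel_submod g (f x) by apply/exact_Y; exists x.
exists (corestrict fS); split=> [k|x].
  by have [x fx] := (exact_Y _).1 (submod_incl_mem k); exists x; apply: val_inj.
rewrite corestrict_eq0; split=> [fx0|[a <-]]; last exact: submod_incl_mem a.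
by exists (submod_elt (fx0 : kernel_submod f x)).
Qed.

End Cokernel.

Section Coherence.
Variables (R : comNzRingType) (Phi : spec R -> Prop).
Hypotheses (hR : noetherian R) (hPhi : specialization_closed Phi).

(* [B] is the cokernel in an exact sequence ... -> P_1 -> P_0 -> B -> 0 whose first j
   terms are injective without associated primes in Phi, as in the definition of n_coherent. *)
Definition cosyzygy (j : nat) (B : lmodType R) :=
  exists (P : nat -> lmodType R) (e : forall i, {linear P i.+1 -> P i}) (pi : {linear P 0%N -> B}),
    [/\ (forall c, exists x, pi x = c), (forall x, pi x = 0 <-> exists y, e 0%N y = x),
        (forall i x, e i x = 0 <-> exists y, e i.+1 y = x) &
        (forall i, (i < j)%N -> injective_module (P i) /\ forall p, Ass (P i) p -> ~ Phi p)].

Lemma cosyzygy0 B : cosyzygy 0 B.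
Proof.
pose e (i : nat) : {linear B -> B} := if odd i then idfun : {linear B -> B} else \0.
exists (fun _ => B), e, idfun; split => //; first by move=> b; exists b.
  by move=> x /=; split=> [x0|[y <-]] //; exists 0; rewrite x0.
move=> i x; rewrite /e /=; case: (odd i) => /=.
  by split=> [->|[y <-]]; first exists 0.
by split=> // _; exists x.
Qed.

Lemma cosyzygyW j k B : (k <= j)%N -> cosyzygy j B -> cosyzygy k B.
Proof.
move=> kj [P [e [pi [pi_surj pi_exact e_exact Pinj]]]]; exists P, e, pi; split => // i ik.
by apply: Pinj; apply: leq_trans kj.
Qed.

Lemma cosyzygyS j (B J B' : lmodType R) (f : {linear B -> J}) (c : {linear J -> B'}) :
  injective f -> injective_module J -> (forall p, Ass J p -> ~ Phi p) ->
  (forall z, exists y, c y = z) -> (forall y, c y = 0 <-> exists x, f x = y) ->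
  cosyzygy j B -> cosyzygy j.+1 B'.
Proof.
move=> f_inj iJ AssJ c_surj c_exact [P [e [pi [pi_surj pi_exact e_exact Pinj]]]].
pose P' (k : nat) : lmodType R := if k is k'.+1 then P k' else J.
pose e' (k : nat) : {linear P' k.+1 -> P' k} :=
  if k is k'.+1 return {linear P' k.+1 -> P' k} then e k' else f \o pi.
exists P', e', c; split => //.
- move=> x; rewrite c_exact; split=> [[b <-]|[y <-]]; last by exists (pi y).
  by have [y <-] := pi_surj b; exists y.
- case=> [|i] x /=; last exact: e_exact.
  split=> [fx0|[y <-]]; last by rewrite (pi_exact _).2 ?linear0 //; exists y.
  by apply/pi_exact; apply: f_inj; rewrite linear0.
- by case=> [|i] //= ilt; apply: Pinj.
Qed.

Lemma cosyzygy_H_Phi_zero n : n_coherent (fun p => ~ Phi p) n ->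
  forall i B, cosyzygy n.+1 B -> H_Phi_zero Phi B i.
Proof.
move=> nc; elim=> [|i IHi] B [P [e [pi [pi_surj pi_exact e_exact Pinj]]]];
  have [J [f [f_inj iJ AssJ]]] := nc B P e pi pi_surj pi_exact e_exact Pinj;
  have GJ := Ass_Gamma_free hR AssJ.
  by apply/H_Phi_zero0; apply: Gamma_free_inj f_inj GJ.
have [Z [c [c_surj c_exact]]] := cokernel_exists f.
apply/(H_Phi_zero_shift f_inj c_surj c_exact iJ GJ); apply: IHi.
apply: (cosyzygyW (leqnSn n.+1)); apply: (cosyzygyS f_inj iJ AssJ c_surj c_exact).
by exists P, e, pi.
Qed.

Lemma cosyzygy_tower n (M : lmodType R) : (forall i, (i <= n)%N -> H_Phi_zero Phi M i) ->
  forall j, (j <= n.+1)%N -> exists B : lmodType R, [/\ cosyzygy j B,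
    forall i, (i + j <= n)%N -> H_Phi_zero Phi B i &
    forall i, H_Phi_zero Phi B i -> H_Phi_zero Phi M (i + j)].
Proof.
move=> HM; elim=> [|j IHj] jn.
  by exists M; split=> [|i|i]; rewrite ?addn0 //; [exact: cosyzygy0 | exact: HM].
have [B [cB HB HBM]] := IHj (ltnW jn).
have GB : Gamma_free Phi B by apply/H_Phi_zero0; apply: HB.
have [E [al [al_inj iE GE]]] := Gamma_free_envelope GB.
have [Z [c [c_surj c_exact]]] := cokernel_exists al.
have shift := H_Phi_zero_shift al_inj c_surj c_exact iE GE.
exists Z; split=> [|i ijn|i HZ]; last by rewrite -addSnnS; apply/HBM/shift.
  by apply: cosyzygyS al_inj iE (Gamma_free_Ass hPhi GE) c_surj c_exact cB.
by apply/shift; apply: HB; rewrite addSnnS.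
Qed.

Lemma n_coherent_vanishing n : n_coherent (fun p => ~ Phi p) n ->
  forall M : lmodType R, (forall i, (i <= n)%N -> H_Phi_zero Phi M i) ->
  forall i, (n < i)%N -> H_Phi_zero Phi M i.
Proof.
move=> nc M HM i ni; have [B [cB _ HBM]] := cosyzygy_tower HM (leqnn n.+1).
by rewrite -(subnK ni); apply/HBM/(cosyzygy_H_Phi_zero nc).
Qed.

Section Kernels.
Variables (n : nat) (C : lmodType R) (P : nat -> lmodType R) (e : forall i, {linear P i.+1 -> P i})
  (pi : {linear P 0%N -> C}).
Hypotheses (pi_exact : forall x, pi x = 0 <-> exists y, e 0%N y = x)
  (e_exact : forall i x, e i x = 0 <-> exists y, e i.+1 y = x).
Hypothesis P_inj : forall i, (i <= n)%N -> injective_module (P i) /\ Gamma_free Phi (P i).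

Definition kernel_at (j : nat) : submod (P j) :=
  if j is j'.+1 return submod (P j) then kernel_submod (e j') else kernel_submod pi.

Definition kernel_mod (j : nat) : lmodType R := submod_type (kernel_at j).

Lemma kernel_at_ses j : exists be : {linear P j.+1 -> kernel_mod j},
  (forall k, exists x, be x = k) /\
  (forall x, be x = 0 <-> exists a : kernel_mod j.+1, submod_incl a = x).
Proof. by case: j => [|j]; apply: kernel_corestrict. Qed.

Lemma kernel_at_shift j i : (j < n)%N ->
  H_Phi_zero Phi (kernel_mod j.+1) i.+1 <-> H_Phi_zero Phi (kernel_mod j) i.
Proof.
move=> jn; have [be [be_surj be_exact]] := kernel_at_ses j.
have [iP GP] := P_inj jn.
exact: (H_Phi_zero_shift submod_incl_inj be_surj be_exact iP GP).
Qed.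

Lemma kernel_at_low i j : (i <= j <= n)%N -> H_Phi_zero Phi (kernel_mod j) i.
Proof.
elim: i j => [|i IHi] j /andP [ij jn].
  by apply/H_Phi_zero0; apply: Gamma_free_inj submod_incl_inj (P_inj jn).2.
case: j ij jn => // j ij jn.
by apply/kernel_at_shift => //; apply: IHi; rewrite -ltnS ij; exact: ltnW.
Qed.

Lemma kernel_at_descent : H_Phi_zero Phi (kernel_mod n) n.+1 ->
  forall j, (j <= n)%N -> H_Phi_zero Phi (kernel_mod j) j.+1.
Proof.
move=> Hn; suff desc k j : (j + k = n)%N -> H_Phi_zero Phi (kernel_mod j) j.+1.
  by move=> j jn; apply: (desc (n - j)%N); rewrite subnKC.
elim: k j => [|k IHk] j jk; first by move: jk; rewrite addn0 => ->.
have jn : (j < n)%N by rewrite -jk addnS ltnS leq_addr.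
by apply/(kernel_at_shift _ jn); apply: IHk; rewrite addSnnS.
Qed.

End Kernels.

Lemma vanishing_n_coherent n :
  (forall M : lmodType R, (forall i, (i <= n)%N -> H_Phi_zero Phi M i) ->
     forall i, (n < i)%N -> H_Phi_zero Phi M i) ->
  n_coherent (fun p => ~ Phi p) n.
Proof.
move=> vanishing C P e pi pi_surj pi_exact e_exact PAss.
have P_inj i : (i <= n)%N -> injective_module (P i) /\ Gamma_free Phi (P i).
  by move=> /PAss [iP AssP]; split => //; exact: Ass_Gamma_free.
have HKn : H_Phi_zero Phi (kernel_mod e pi n) n.+1.
  apply: (vanishing _ _ n.+1 (ltnSn n)) => i ni.
  by apply: (kernel_at_low pi_exact e_exact P_inj); rewrite ni leqnn.
have HK0 := kernel_at_descent pi_exact e_exact P_inj HKn (leq0n n).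
have pi_ker x : pi x = 0 <-> exists a : kernel_mod e pi 0, submod_incl a = x.
  split=> [pi0|[a <-]]; last exact (submod_incl_mem a).
  by exists (submod_elt (pi0 : kernel_submod pi x)).
have [iP0 GP0] := P_inj 0%N (leq0n n).
have /H_Phi_zero0 GC := (H_Phi_zero_shift submod_incl_inj pi_surj pi_ker iP0 GP0 0).1 HK0.
have [J [f [f_inj iJ GJ]]] := Gamma_free_envelope GC.
by exists J, f; split => //; exact: Gamma_free_Ass.
Qed.

End Coherence.

Unset Implicit Arguments.

Theorem proposition3p8 (R : comNzRingType) (hR : noetherian R)
  (Phi : spec R -> Prop) (hPhi : specialization_closed Phi) (n : nat) :
  n_coherent (fun p => ~ Phi p) n <->
  (forall M : lmodType R,
     (forall i, (i <= n)%N -> H_Phi_zero Phi M i) ->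
     forall i, (n < i)%N -> H_Phi_zero Phi M i).
Proof.
split; first exact: n_coherent_vanishing.
exact: vanishing_n_coherent.
Qed.
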